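(* Let $p,q$ be integers and let $(u_n)_{n\ge0}$ be the Lucas sequence defined by $u_0=0$, $u_1=1$ and $u_{n+2}=pu_{n+1}+qu_n$ for all $n\ge0$. Then the following are equivalent: (a) for every $k\ge1$ the integers $u_0,\dots,u_{2^k-1}$ are pairwise distinct and $\mathcal{D}_{\mathbf u}(2^k)=2^k$ (i.e. $u_0,\dots,u_{2^k-1}$ are pairwise incongruent modulo $2^k$); (b) $p\equiv 2\pmod 4$ and $q\equiv 3\pmod 4$.
   Context: For a sequence $\mathbf w=(w_n)_{n\ge 0}$ of integers and a positive integer $n$ such that $w_0,\dots,w_{n-1}$ are pairwise distinct, the discriminator $\mathcal{D}_{\mathbf w}(n)$ is the smallest positive integer $m$ such that $w_0,\dots,w_{n-1}$ are pairwise incongruent modulo $m$. *)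

From HB Require Import structures.
From mathcomp Require Import all_boot all_order all_algebra.
Set Implicit Arguments. Unset Strict Implicit. Unset Printing Implicit Defensive.
Import Order.TTheory GRing.Theory Num.Theory.
Local Open Scope ring_scope.

(* Pairs (u_n, u_{n+1}) of the Lucas sequence u_0 = 0, u_1 = 1,
   u_{n+2} = p u_{n+1} + q u_n. *)
Fixpoint lucas_pair (p q : int) (n : nat) : int * int :=
  match n with
  | O => (0, 1)
  | S n' => let: (a, b) := lucas_pair p q n' in (b, p * b + q * a)
  end.

Definition lucas (p q : int) (n : nat) : int := (lucas_pair p q n).1.

Definition pairwise_distinct (w : nat -> int) (n : nat) : Prop :=
  forall i j : nat, (i < n)%N -> (j < n)%N -> i <> j -> w i <> w j.

Definition pairwise_incongruent (w : nat -> int) (n m : nat) : Prop :=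
  forall i j : nat, (i < n)%N -> (j < n)%N -> i <> j ->
    ~ (w i = w j %[mod m%:Z])%Z.

Definition discriminator_is (w : nat -> int) (n m : nat) : Prop :=
  (0 < m)%N /\ pairwise_incongruent w n m /\
  (forall m' : nat, (0 < m')%N -> (m' < m)%N -> ~ pairwise_incongruent w n m').

From HB Require Import structures.
From mathcomp Require Import all_boot all_order all_algebra.
From mathcomp Require Import zify ring.
Set Implicit Arguments.
Unset Strict Implicit.
Import Order.TTheory GRing.Theory Num.Theory.
Local Open Scope ring_scope.

(* If p = 2 and q = 3 (mod 4), the doubling formulas show by induction on k that,
   for M = 2^k, both u_M and u_{M+1} - 1 are odd multiples of M.  The difference
   u_{n+M} - u_n satisfies the Lucas recurrence, with p even and q odd, so it is an
   odd multiple of M for every n: u_{n+M} = u_n + M (mod 2M).  Induction on k then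
   shows that u_0, ..., u_{2^k-1} are incongruent modulo 2^k, and by pigeonhole no
   smaller modulus separates 2^k integers.  Conversely, u_n mod 8 only depends on
   p and q mod 8, and a check of the 64 residue pairs shows that only p = 2, q = 3
   (mod 4) keep u_0, ..., u_3 incongruent mod 4 and u_0, ..., u_7 incongruent mod 8. *)

Lemma nat_ind2 (P : nat -> Prop) : P 0%N -> P 1%N ->
  (forall n, P n -> P n.+1 -> P n.+2) -> forall n, P n.
Proof.
move=> P0 P1 PSS n; suff [] : P n /\ P n.+1 by [].
by elim: n => [|n [Pn PSn]]; split => //; apply: PSS.
Qed.

Lemma modz_dvdm (d m x : int) : (d %| m)%Z -> ((x %% m)%Z %% d)%Z = (x %% d)%Z.
Proof. by move=> /dvdzP [c ->]; rewrite {2}(divz_eq x (c * d)) mulrA modzMDl. Qed.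

Lemma Ndvdz_double (m : int) : m != 0 -> ~~ (2 * m %| m)%Z.
Proof.
move=> m_neq0; have -> : (2 * m %| m)%Z = (m * 2 %| m * 1)%Z by rewrite mulrC mulr1.
by rewrite dvdz_mul2l.
Qed.

Definition odd_multiple (m x : int) := exists e : int, x = m * (2 * e + 1).

Lemma odd_multiple_dvd m x : odd_multiple m x -> (2 * m %| x - m)%Z.
Proof. by move=> [e ->]; apply/dvdzP; exists e; ring. Qed.

Lemma pairwise_incongruent_distinct w n m :
  pairwise_incongruent w n m -> pairwise_distinct w n.
Proof.
by move=> incong i j lt_in lt_jn neq_ij eq_wij; apply: (incong i j) => //; rewrite eq_wij.
Qed.

Lemma pairwise_incongruent_leq w n m : (0 < m)%N ->
  pairwise_incongruent w n m -> (n <= m)%N.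
Proof.
case: m => // m _ incong; pose f (i : 'I_n) : 'I_m.+1 := inord (absz (w i %% m.+1)%Z).
have res_ge0 x : 0 <= (x %% m.+1)%Z by rewrite modz_ge0.
have res_lt x : (absz (x %% m.+1)%Z < m.+1)%N.
  by rewrite -ltz_nat abszE ger0_norm ?ltz_pmod.
suff /leq_card : injective f by rewrite !card_ord.
move=> i j /(congr1 val); rewrite /= !inordK // => eq_res; apply/val_inj/eqP.
have [//|/eqP neq_ij] := eqVneq (val i) (val j).
case: (incong i j (ltn_ord i) (ltn_ord j) neq_ij).
by rewrite -[LHS]ger0_norm // -[RHS]ger0_norm // -!abszE eq_res.
Qed.

Section LucasSequence.

Variables p q : int.
Local Notation u := (lucas p q).

Lemma lucas0 : u 0 = 0. Proof. by []. Qed.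
Lemma lucas1 : u 1 = 1. Proof. by []. Qed.

Lemma lucasSS n : u n.+2 = p * u n.+1 + q * u n.
Proof. by rewrite /lucas /=; case: (lucas_pair p q n). Qed.

Lemma lucasD m n : u (m + n).+1 = u m.+1 * u n.+1 + q * u m * u n.
Proof.
elim/nat_ind2: n => [|| n IHn IHSn].
- by rewrite addn0 lucas0 lucas1; ring.
- by rewrite addn1 !lucasSS lucas0 lucas1; ring.
- by rewrite !addnS lucasSS IHn -addnS IHSn !lucasSS; ring.
Qed.

Lemma lucas_double n : u n.*2 = u n * (2 * u n.+1 - p * u n).
Proof.
case: n => [|n]; first by rewrite lucas0 !mul0r.
by rewrite -addnn addSn lucasD !lucasSS; ring.
Qed.

Lemma lucas_doubleS n : u n.*2.+1 = u n.+1 ^+ 2 + q * u n ^+ 2.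
Proof. by rewrite -addnn lucasD; ring. Qed.

End LucasSequence.

Lemma lucas_congr (m p q p' q' : int) n : (m %| p - p')%Z -> (m %| q - q')%Z ->
  (m %| lucas p q n - lucas p' q' n)%Z.
Proof.
move=> dvd_p dvd_q; elim/nat_ind2: n => [|| n IHn IHSn].
- by rewrite subrr dvdz0.
- by rewrite subrr dvdz0.
have -> : lucas p q n.+2 - lucas p' q' n.+2 =
  p * (lucas p q n.+1 - lucas p' q' n.+1) + q * (lucas p q n - lucas p' q' n)
  + (lucas p' q' n.+1 * (p - p') + lucas p' q' n * (q - q')).
  by rewrite !lucasSS; ring.
by rewrite !rpredD ?dvdz_mull ?dvdz_mulr.
Qed.

Section PowerOfTwoShift.

Variables p q c d : int.
Hypothesis p_def : p = 2 * (2 * c + 1).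
Hypothesis q_def : q = 4 * d + 3.
Local Notation u := (lucas p q).

(* Writing u_N = N a' and u_{N+1} = 1 + N b' with a', b' odd, we get
   b'^2 + q a'^2 = 1 + q = 0 (mod 4): no parity condition on N is needed. *)
Lemma lucas_odd_multiple_double (N : nat) :
  odd_multiple N (u N) -> odd_multiple N (u N.+1 - 1) ->
  odd_multiple N.*2 (u N.*2) /\ odd_multiple N.*2 (u N.*2.+1 - 1).
Proof.
move=> [a u_N] [b u_SN]; have -> : N.*2%:Z = 2 * N%:Z by rewrite -mul2n PoszM.
have {}u_SN : u N.+1 = 1 + N%:Z * (2 * b + 1) by rewrite -u_SN; ring.
split.
- exists (a + N%:Z * (b - 2 * a * c - a - c) * (2 * a + 1)).
  by rewrite lucas_double u_N u_SN p_def; ring.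
- exists (b + N%:Z * (b ^+ 2 + b + d * (2 * a + 1) ^+ 2 + 3 * a ^+ 2 + 3 * a + 1)).
  by rewrite lucas_doubleS u_N u_SN q_def; ring.
Qed.

Lemma lucas_pow2_odd_multiple k :
  odd_multiple (2 ^ k)%:Z (u (2 ^ k)) /\ odd_multiple (2 ^ k)%:Z (u (2 ^ k).+1 - 1).
Proof.
elim: k => [|k [u_M u_SM]].
  by split; [exists 0 | exists (2 * c)]; rewrite ?lucasSS lucas1 ?lucas0 ?p_def; ring.
by rewrite expnS mul2n; apply: lucas_odd_multiple_double.
Qed.

Lemma lucas_shift_odd_multiple (M : nat) :
  odd_multiple M (u M) -> odd_multiple M (u M.+1 - 1) ->
  forall n, odd_multiple M (u (n + M) - u n).
Proof.
move=> u_M u_SM; elim/nat_ind2 => [|| n [e1 IHn] [e2 IHSn]].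
- by rewrite add0n lucas0 subr0.
- by rewrite add1n lucas1.
exists ((2 * c + 1) * (2 * e2 + 1) + (4 * d + 3) * e1 + 2 * d + 1).
have -> : u (n.+2 + M) - u n.+2 =
  p * (u (n.+1 + M) - u n.+1) + q * (u (n + M) - u n).
  by rewrite !addSn !lucasSS; ring.
by rewrite IHn IHSn p_def q_def; ring.
Qed.

Lemma lucas_pow2_shift k n :
  (2 * (2 ^ k)%:Z %| u (n + 2 ^ k) - u n - (2 ^ k)%:Z)%Z.
Proof.
have [u_M u_SM] := lucas_pow2_odd_multiple k.
exact/odd_multiple_dvd/lucas_shift_odd_multiple.
Qed.

Lemma lucas_pow2_incong k i j : (i < 2 ^ k)%N -> (j < 2 ^ k)%N ->
  ((2 ^ k)%:Z %| u i - u j)%Z -> i = j.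
Proof.
elim: k i j => [|k IHk] i j; first by rewrite expn0 !ltnS !leqn0 => /eqP-> /eqP->.
set M := (2 ^ k)%N in IHk *.
have shift n : (2 * M%:Z %| u (n + M) - u n - M%:Z)%Z := lucas_pow2_shift k n.
have M_gt0 : (0 < M)%N by rewrite expn_gt0.
have dvd_M_2M : (M%:Z %| 2 * M%:Z)%Z by rewrite dvdz_mull.
have IH2 i' j' : (i' < M)%N -> (j' < M)%N -> (2 * M%:Z %| u i' - u j')%Z -> i' = j'.
  by move=> hi' hj' /(dvdz_trans dvd_M_2M); apply: IHk.
have -> : (2 ^ k.+1)%:Z = 2 * M%:Z by rewrite expnS PoszM.
rewrite expnS -/M.
wlog le_ij : i j / (i <= j)%N.
  move=> W hi hj dvd_ij; case: (leqP i j) => [|/ltnW] le; first exact: W.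
  by apply/esym/W => //; rewrite -opprB rpredN.
move=> hi hj dvd_ij.
have [lt_jM | le_Mj] := ltnP j M; first exact: IH2 (leq_ltn_trans le_ij lt_jM) lt_jM _.
rewrite -(subnK le_Mj) in hj dvd_ij *; set j' := (j - M)%N in hj dvd_ij *.
have lt_j'M : (j' < M)%N by lia.
have [lt_iM | le_Mi] := ltnP i M.
  have dvd_ij' : (2 * M%:Z %| u i - u j' - M%:Z)%Z.
    have -> : u i - u j' - M%:Z = u i - u (j' + M) + (u (j' + M) - u j' - M%:Z) by ring.
    exact: rpredD.
  have eq_ij' : i = j'.
    apply: IHk => //; have -> : u i - u j' = u i - u j' - M%:Z + M%:Z by ring.
    by rewrite rpredD ?dvdzz ?(dvdz_trans dvd_M_2M dvd_ij').
  exfalso; move: dvd_ij'; rewrite eq_ij' subrr sub0r rpredN.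
  by apply/negP/Ndvdz_double; rewrite eqz_nat -lt0n.
rewrite -(subnK le_Mi) in dvd_ij *; congr (_ + M)%N; apply: IH2 => //.
  by lia.
have -> : u (i - M) - u j' = u (i - M + M) - u (j' + M)
  - (u (i - M + M) - u (i - M) - M%:Z) + (u (j' + M) - u j' - M%:Z) by ring.
by apply: rpredD; [apply: rpredB |].
Qed.

End PowerOfTwoShift.

Definition lucas_incongb (p q : int) (m N : nat) : bool :=
  all (fun i => all (fun j => (m%:Z %| lucas p q i - lucas p q j)%Z ==> (i == j))
    (iota 0 N)) (iota 0 N).

Lemma lucas_incongb_congr (p q r s : int) (m N : nat) :
  (m%:Z %| p - r)%Z -> (m%:Z %| q - s)%Z ->
  pairwise_incongruent (lucas p q) N m -> lucas_incongb r s m N.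
Proof.
move=> dvd_pr dvd_qs incong; apply/allP => i; rewrite mem_iota => /andP [_ lt_iN].
apply/allP => j; rewrite mem_iota => /andP [_ lt_jN]; apply/implyP => dvd_ij.
have [//|/eqP neq_ij] := eqVneq i j.
case: (incong i j lt_iN lt_jN neq_ij); apply/eqP; rewrite eqz_mod_dvd.
have -> : lucas p q i - lucas p q j = lucas r s i - lucas r s j
  + (lucas p q i - lucas r s i) - (lucas p q j - lucas r s j) by ring.
by apply: rpredB; [apply: rpredD |]; rewrite // lucas_congr.
Qed.

(* The nested [if]s spare [vm_compute] the mod-8 test when the mod-4 test fails. *)
Lemma lucas_incongb_residues : all (fun r : nat => all (fun s : nat =>
    if lucas_incongb r s 4 4 then if lucas_incongb r s 8 8 then
      (r %% 4 == 2) && (s %% 4 == 3) else true else true)%N (iota 0 8)) (iota 0 8).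
Proof. by vm_compute. Qed.

Lemma lucas_incong_residues (p q : int) :
  pairwise_incongruent (lucas p q) 4 4 -> pairwise_incongruent (lucas p q) 8 8 ->
  (p %% 4)%Z = 2 /\ (q %% 4)%Z = 3.
Proof.
move=> incong4 incong8.
have residue (x : int) : exists2 r : nat, (r < 8)%N & (8 %| x - r%:Z)%Z /\ (x %% 4)%Z = (r %% 4)%N.
  have x8_ge0 : 0 <= (x %% 8)%Z by rewrite modz_ge0.
  exists (absz (x %% 8)%Z); first by rewrite -ltz_nat abszE ger0_norm ?ltz_pmod.
  rewrite -modz_nat abszE ger0_norm // modz_dvdm //; split=> //.
  by apply/dvdzP; exists (x %/ 8)%Z; rewrite {1}(divz_eq x 8) addrK.
have [r lt_r8 [dvd_pr ->]] := residue p; have [s lt_s8 [dvd_qs ->]] := residue q.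
have dvd48 : (4 %| 8)%Z by [].
have /allP/(_ r) := lucas_incongb_residues; rewrite mem_iota => /(_ lt_r8) /allP/(_ s).
rewrite mem_iota => /(_ lt_s8).
rewrite (lucas_incongb_congr (dvdz_trans dvd48 dvd_pr) (dvdz_trans dvd48 dvd_qs) incong4).
by rewrite (lucas_incongb_congr dvd_pr dvd_qs incong8) => /andP [/eqP -> /eqP ->].
Qed.

Theorem theorem5 (p q : int) :
  (forall k : nat, (1 <= k)%N ->
     pairwise_distinct (lucas p q) (2 ^ k) /\
     discriminator_is (lucas p q) (2 ^ k) (2 ^ k))
  <-> ((p %% 4)%Z = 2 /\ (q %% 4)%Z = 3).
Proof.
split=> [incong | [p_mod4 q_mod4] k _].
  have [_ [_ [incong4 _]]] := incong 2%N isT.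
  have [_ [_ [incong8 _]]] := incong 3%N isT.
  exact: lucas_incong_residues incong4 incong8.
have p_def : p = 2 * (2 * (p %/ 4)%Z + 1) by rewrite {1}(divz_eq p 4) p_mod4; ring.
have q_def : q = 4 * (q %/ 4)%Z + 3 by rewrite {1}(divz_eq q 4) q_mod4; ring.
have incong : pairwise_incongruent (lucas p q) (2 ^ k) (2 ^ k).
  move=> i j lt_i lt_j neq_ij /eqP; rewrite eqz_mod_dvd.
  by move/(lucas_pow2_incong p_def q_def lt_i lt_j).
split; first exact: pairwise_incongruent_distinct incong.
split; [by rewrite expn_gt0 | split=> // m m_gt0 lt_m incong_m].
by move: lt_m; rewrite ltnNge (pairwise_incongruent_leq m_gt0 incong_m).
Qed.
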